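(* Let $\tau$ be a row-standard tableau with $\tau\in D_i$, and let $j$ be the entry in the box immediately above $i$. Then $n_{\mathrm{inv}}(\delta_i(\tau))=n_{\mathrm{inv}}(\tau)-1$ if $(\min(i,j),\max(i,j))$ is an inversion of $\tau$, and $n_{\mathrm{inv}}(\delta_i(\tau))=n_{\mathrm{inv}}(\tau)+1$ otherwise.
   Context: Fix a Young diagram $Y$ with $n$ boxes (rows drawn top to bottom, left-justified). A row-standard tableau of shape $Y$ is a bijective numbering of its boxes by $1,\dots,n$ increasing left to right along rows; it is standard if also increasing top to bottom along columns. An inversion of a row-standard $\tau$ is a pair $i<j$ in the same column such that either (i) $i$ or $j$ has no box immediately to its right and $i$ is below $j$, or (ii) $i,j$ have right neighbours $i',j'$ with $i'>j'$; $n_{\mathrm{inv}}(\tau)$ is their number. For $i\in\{1,\dots,n\}$, $D_i$ is the set of row-standard tableaux $\tau$ such that: (1) $i$ is not in the first row, and letting $j$ be the entry immediately above $i$: (2) if $i$ has a right neighbour $i'$ then $j<i'$, and if $j$ has a right neighbour $j'$ then $i<j'$; (3) for every $k$ in the same column as $i,j$ with $\min(i,j)<k<\max(i,j)$, exactly one of $(\min(i,j),k)$ and $(k,\max(i,j))$ is an inversion. For $\tau\in D_i$, if $i_1<\dots<i_q=i$ are the entries of the row of $i$ up to $i$ and $j_1<\dots<j_q=j$ those of the row of $j$ up to $j$, then $\delta_i(\tau)$ is the row-standard tableau obtained by swapping $i_k$ and $j_k$ for every $k=1,\dots,q$. *)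

From mathcomp Require Import all_boot.
Set Implicit Arguments. Unset Strict Implicit. Unset Printing Implicit Defensive.

(* A tableau is the list of its rows, top row first (row index 0 is the top;
   larger row index = lower).  Entry in row r, column c (both 0-based). *)
Definition tableau := seq (seq nat).

Definition young_shape (T : tableau) : bool :=
  all (fun row => 0 < size row) T && sorted geq (map size T).

Definition row_standard (T : tableau) : bool :=
  [&& young_shape T,
      perm_eq (flatten T) (iota 1 (size (flatten T))) &
      all (sorted ltn) T].

Definition entry (T : tableau) (r c : nat) : nat := nth 0 (nth [::] T r) c.

Definition row_of (T : tableau) (x : nat) : nat := find (fun row => x \in row) T.
Definition col_of (T : tableau) (x : nat) : nat := index x (nth [::] T (row_of T x)).

Definition has_right (T : tableau) (x : nat) : bool :=
  (col_of T x).+1 < size (nth [::] T (row_of T x)).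
Definition right_of (T : tableau) (x : nat) : nat :=
  entry T (row_of T x) (col_of T x).+1.

Definition is_inv (T : tableau) (a b : nat) : bool :=
  [&& a < b, a \in flatten T, b \in flatten T,
      col_of T a == col_of T b &
      ((~~ has_right T a || ~~ has_right T b) && (row_of T b < row_of T a))
      || [&& has_right T a, has_right T b & right_of T b < right_of T a]].

Definition n_inv (T : tableau) : nat :=
  \sum_(a <- flatten T) \sum_(b <- flatten T) is_inv T a b.

(* the entry immediately above i (meaningful when i is not in the first row) *)
Definition above (T : tableau) (i : nat) : nat :=
  entry T (row_of T i).-1 (col_of T i).

Definition in_D (T : tableau) (i : nat) : bool :=
  let j := above T i in
  [&& i \in flatten T,
      0 < row_of T i,
      has_right T i ==> (j < right_of T i),
      has_right T j ==> (i < right_of T j) &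
      all (fun k =>
             ((col_of T k == col_of T i) && (minn i j < k < maxn i j)) ==>
             (is_inv T (minn i j) k (+) is_inv T k (maxn i j)))
          (flatten T)].

Definition delta (T : tableau) (i : nat) : tableau :=
  let r := row_of T i in
  let q := (col_of T i).+1 in
  let Ri := nth [::] T r in
  let Rj := nth [::] T r.-1 in
  set_nth [::] (set_nth [::] T r (take q Rj ++ drop q Ri)) r.-1
          (take q Ri ++ drop q Rj).

(* Let i sit in row r, column c.  δ_i exchanges the first c+1 boxes of rows
   r-1 and r, so an entry keeps its box in columns > c, the entries i and j
   trade boxes in column c, and rows r-1 and r are exchanged in columns < c.
   Whether a pair (a, b) of one column is an inversion depends on the numeric
   order a < b and on a positional condition [inv_shape] (right neighbours,
   relative rows).  We prove that the positional condition of (a, b) in δ_i(τ)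
   is that of (σa, σb) in τ, where σ is the transposition (i j): left of column
   c the exchange of rows r-1 and r is invisible, because boxes of these rows
   always have a right neighbour there.  Re-indexing by σ, n_inv(δ_i τ) counts
   the pairs with σa < σb and positional condition in τ.  A counting lemma on
   transpositions compares this with n_inv τ: besides the pair {i, j} itself,
   only pairs with an entry strictly between min(i,j) and max(i,j) can change,
   and these contributions cancel by condition (3) of D_i. *)
From mathcomp Require Import all_boot.
From mathcomp Require Import zify.
Set Implicit Arguments. Unset Strict Implicit. Unset Printing Implicit Defensive.

Definition swap (x y a : nat) : nat := if a == x then y else if a == y then x else a.

Lemma swapK x y : involutive (swap x y).
Proof.
move=> a; rewrite /swap.
case: (a =P x) => [->|/eqP/negbTE ax]; first by rewrite eqxx; case: (y =P x).
by case: (a =P y) => [->|/eqP/negbTE ay]; rewrite ?eqxx // ax ay.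
Qed.

Lemma swapL x y : swap x y x = y.
Proof. by rewrite /swap eqxx. Qed.

Lemma swapR x y : swap x y y = x.
Proof. by rewrite /swap eqxx; case: eqP. Qed.

Lemma swap_id x y a : a != x -> a != y -> swap x y a = a.
Proof. by rewrite /swap => /negbTE-> /negbTE->. Qed.

Lemma swap_minmax x y : swap (minn x y) (maxn x y) =1 swap x y.
Proof.
move=> a; case: leqP => // _; rewrite /swap.
by do 2 case: eqP => [->|?] //=; rewrite ?eqxx //; case: eqP.
Qed.

Lemma mem_swap (F : seq nat) x y a : x \in F -> y \in F -> a \in F -> swap x y a \in F.
Proof. by rewrite /swap => xF yF aF; case: eqP => _ //; case: eqP. Qed.

Lemma swap_pred_ltn r s t : 0 < r -> s != r -> s != r.-1 ->
  ((swap r r.-1 s < swap r r.-1 t) = (s < t)) /\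
  ((swap r r.-1 t < swap r r.-1 s) = (t < s)).
Proof.
move=> r0 /negbTE sr /negbTE sr1; rewrite /swap sr sr1.
by case: (t =P r) => [->|_]; [|case: (t =P r.-1) => [->|_]]; split => //;
  apply/idP/idP; lia.
Qed.

Lemma sum2_perm (F G : seq nat) (f : nat -> nat -> nat) : perm_eq F G ->
  \sum_(a <- F) \sum_(b <- F) f a b = \sum_(a <- G) \sum_(b <- G) f a b.
Proof.
move=> pFG; rewrite (perm_big _ pFG); apply: eq_bigr => a _.
exact: perm_big.
Qed.

Lemma sum2_perm_map (F : seq nat) (g : nat -> nat) (f : nat -> nat -> nat) :
  perm_eq (map g F) F ->
  \sum_(a <- F) \sum_(b <- F) f (g a) (g b) = \sum_(a <- F) \sum_(b <- F) f a b.
Proof.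
move=> pgF; rewrite -(sum2_perm f pgF) big_map.
by apply: eq_bigr => a _; rewrite big_map.
Qed.

Lemma perm_map_swap (F : seq nat) x y : uniq F -> x \in F -> y \in F ->
  perm_eq (map (swap x y) F) F.
Proof.
move=> uF xF yF; apply: uniq_perm => //.
  by rewrite (map_inj_uniq (can_inj (swapK x y))).
move=> a; apply/mapP/idP => [[b bF ->]|aF]; first exact: mem_swap.
by exists (swap x y a); [exact: mem_swap | rewrite swapK].
Qed.

Lemma sum2_cons2 (x y : nat) (R : seq nat) (f : nat -> nat -> nat) :
  \sum_(a <- [:: x, y & R]) \sum_(b <- [:: x, y & R]) f a b =
  f x x + f x y + f y x + f y y
  + \sum_(k <- R) (f x k + f k x + f y k + f k y)
  + \sum_(a <- R) \sum_(b <- R) f a b.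
Proof.
have inner a : \sum_(b <- [:: x, y & R]) f a b = f a x + f a y + \sum_(b <- R) f a b.
  by rewrite !big_cons addnA.
by rewrite (eq_bigr _ (fun a _ => inner a)) !big_cons !big_split /=; lia.
Qed.

Lemma transpose_pair_terms (P : nat -> nat -> bool) lo hi k :
  lo < hi -> k != lo -> k != hi ->
  (lo < k < hi -> P lo k + P k hi = P k lo + P hi k) ->
  (hi < k) && P lo k + (k < hi) && P k lo + (lo < k) && P hi k + (k < lo) && P k hi
  = (lo < k) && P lo k + (k < lo) && P k lo + (hi < k) && P hi k + (k < hi) && P k hi.
Proof.
move=> lohi klo khi mid.
case: (ltngtP k lo) => [klt|kgt|/eqP]; last by rewrite (negbTE klo).
  by rewrite (ltn_trans klt lohi) ltnNge (ltnW (ltn_trans klt lohi)) /=; lia.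
case: (ltngtP k hi) => [klt|kgt'|/eqP]; last by rewrite (negbTE khi).
  by have := mid; rewrite kgt klt => /(_ isT) /=; lia.
by rewrite /=; lia.
Qed.

Lemma inversions_transpose (F : seq nat) (P : nat -> nat -> bool) lo hi :
  uniq F -> lo \in F -> hi \in F -> lo < hi ->
  (forall k, k \in F -> lo < k < hi -> P lo k + P k hi = P k lo + P hi k) ->
  \sum_(a <- F) \sum_(b <- F) ((swap lo hi a < swap lo hi b) && P a b) + P lo hi
  = \sum_(a <- F) \sum_(b <- F) ((a < b) && P a b) + P hi lo.
Proof.
move=> uF loF hiF lohi balanced.
have hilo : hi != lo by rewrite gtn_eqF.
set R := rem hi (rem lo F).
have pF : perm_eq F [:: lo, hi & R].
  apply: perm_trans (perm_to_rem loF) _; rewrite perm_cons; apply: perm_to_rem.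
  by rewrite (rem_filter _ uF) mem_filter /= hilo.
have := uF; rewrite (perm_uniq pF) /= !inE negb_or => /andP[/andP[_ loR] /andP[hiR _]].
have outR k : k \in R -> (k != lo) && (k != hi).
  by move=> kR; apply/andP; split; [apply: contraNneq loR | apply: contraNneq hiR] => <-.
have swap_out k : k \in R -> swap lo hi k = k.
  by move=> /outR /andP[klo khi]; apply: swap_id.
rewrite !(sum2_perm _ pF) !sum2_cons2 swapL swapR.
have -> : \sum_(a <- R) \sum_(b <- R) (swap lo hi a < swap lo hi b) && P a b
        = \sum_(a <- R) \sum_(b <- R) (a < b) && P a b.
  by apply: eq_big_seq => a aR; apply: eq_big_seq => b bR; rewrite !swap_out.
have -> : \sum_(k <- R) ((hi < swap lo hi k) && P lo k + (swap lo hi k < hi) && P k lo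
            + (lo < swap lo hi k) && P hi k + (swap lo hi k < lo) && P k hi)
        = \sum_(k <- R) ((lo < k) && P lo k + (k < lo) && P k lo
            + (hi < k) && P hi k + (k < hi) && P k hi).
  apply: eq_big_seq => k kR; rewrite swap_out //.
  have /andP[klo khi] := outR k kR.
  apply: transpose_pair_terms => // mid.
  by apply: balanced; rewrite // (perm_mem pF) !inE kR !orbT.
by rewrite !ltnn lohi ltnNge (ltnW lohi) /=; lia.
Qed.

Section Positions.
Variable T : tableau.

Lemma flatten_split s : s < size T ->
  flatten T = flatten (take s T) ++ nth [::] T s ++ flatten (drop s.+1 T).
Proof. by move=> sT; rewrite -{1}(cat_take_drop s T) flatten_cat (drop_nth [::] sT). Qed.

Lemma entry_mem s y : s < size T -> y < size (nth [::] T s) -> entry T s y \in flatten T.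
Proof. by move=> sT ys; apply/flattenP; exists (nth [::] T s); rewrite ?mem_nth. Qed.

Lemma mem_pos x : x \in flatten T ->
  [/\ row_of T x < size T, col_of T x < size (nth [::] T (row_of T x))
    & entry T (row_of T x) (col_of T x) = x].
Proof.
move=> /flattenP[row rowT xrow].
have xrows : has (fun row => x \in row) T by apply/hasP; exists row.
have xin : x \in nth [::] T (row_of T x) := nth_find [::] xrows.
by split; [rewrite -has_find | rewrite index_mem | rewrite /entry nth_index].
Qed.

Hypothesis uT : uniq (flatten T).

Lemma uniq_row s : uniq (nth [::] T s).
Proof.
case: (ltnP s (size T)) => sT; last by rewrite nth_default.
by move: uT; rewrite (flatten_split sT) !cat_uniq => /and3P[_ _ /and3P[]].
Qed.

Lemma row_of_entry s y : s < size T -> y < size (nth [::] T s) ->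
  row_of T (entry T s y) = s.
Proof.
move=> sT ys; set x := entry T s y.
have xs : x \in nth [::] T s by exact: mem_nth.
have above_s : ~~ has (fun row => x \in row) (take s T).
  apply/hasPn => row rowT; apply/negP => xrow.
  move: uT; rewrite (flatten_split sT) cat_uniq => /and3P[_ /hasPn disj _].
  have xrest : x \in nth [::] T s ++ flatten (drop s.+1 T) by rewrite mem_cat xs.
  by have /negP := disj x xrest; apply; apply/flattenP; exists row.
rewrite /row_of -{1}(cat_take_drop s T) find_cat (negbTE above_s) size_take sT.
by rewrite (drop_nth [::] sT) /= xs addn0.
Qed.

Lemma pos_entry s y : s < size T -> y < size (nth [::] T s) ->
  [/\ row_of T (entry T s y) = s, col_of T (entry T s y) = y,
      has_right T (entry T s y) = (y.+1 < size (nth [::] T s)) &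
      right_of T (entry T s y) = entry T s y.+1].
Proof.
move=> sT ys; have rowE := row_of_entry sT ys.
have colE : col_of T (entry T s y) = y by rewrite /col_of rowE index_uniq ?uniq_row.
by rewrite /has_right /right_of rowE colE.
Qed.

Lemma entry_inj s t y z : s < size T -> y < size (nth [::] T s) ->
  t < size T -> z < size (nth [::] T t) -> entry T s y = entry T t z -> s = t /\ y = z.
Proof.
move=> sT ys tT zt e.
have [rs cs _ _] := pos_entry sT ys; have [rt ct _ _] := pos_entry tT zt.
by split; [rewrite -rs e rt | rewrite -cs e ct].
Qed.

End Positions.

Definition inv_shape (T : tableau) (a b : nat) : bool :=
  (col_of T a == col_of T b) &&
  (((~~ has_right T a || ~~ has_right T b) && (row_of T b < row_of T a))
   || [&& has_right T a, has_right T b & right_of T b < right_of T a]).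

Lemma is_invE T a b :
  is_inv T a b = [&& a < b, a \in flatten T, b \in flatten T & inv_shape T a b].
Proof. by []. Qed.

Lemma n_invE T :
  n_inv T = \sum_(a <- flatten T) \sum_(b <- flatten T) ((a < b) && inv_shape T a b).
Proof.
by apply: eq_big_seq => a aT; apply: eq_big_seq => b bT; rewrite is_invE aT bT.
Qed.

Lemma inv_shape_antisym T a b : uniq (flatten T) ->
  a \in flatten T -> b \in flatten T -> a != b -> col_of T a = col_of T b ->
  inv_shape T b a = ~~ inv_shape T a b.
Proof.
move=> uT aT bT ab cab.
have [ra ca ea] := mem_pos aT; have [rb cb eb] := mem_pos bT.
have rab : row_of T a != row_of T b.
  by apply: contra ab => /eqP rab; rewrite -ea -eb rab cab.
rewrite /inv_shape cab eqxx /=.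
case: (boolP (has_right T a)) => ha; case: (boolP (has_right T b)) => hb /=;
  try by case: ltngtP rab.
have roab : right_of T a != right_of T b.
  apply: contra rab => /eqP e; move: ha hb; rewrite /has_right => ha hb.
  by rewrite -(row_of_entry uT ra ha) -(row_of_entry uT rb hb) -/(right_of T a) e.
by case: ltngtP roab.
Qed.

Definition swap_prefixes (T : tableau) (r c : nat) : tableau :=
  set_nth [::]
    (set_nth [::] T r (take c.+1 (nth [::] T r.-1) ++ drop c.+1 (nth [::] T r)))
    r.-1 (take c.+1 (nth [::] T r) ++ drop c.+1 (nth [::] T r.-1)).

Lemma deltaE T i : delta T i = swap_prefixes T (row_of T i) (col_of T i).
Proof. by []. Qed.

Lemma nth_splice (X Y : seq nat) c y : c < size X ->
  nth 0 (take c.+1 X ++ drop c.+1 Y) y = if y <= c then nth 0 X y else nth 0 Y y.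
Proof.
move=> cX; rewrite nth_cat size_takel // ltnS.
by case: leqP => yc; [rewrite nth_take | rewrite nth_drop subnKC].
Qed.

Lemma size_splice (X Y : seq nat) c : c < size X -> c < size Y ->
  size (take c.+1 X ++ drop c.+1 Y) = size Y.
Proof. by move=> cX cY; rewrite size_cat size_takel // size_drop subnKC. Qed.

Lemma size_row_pred (T : tableau) r : young_shape T -> 0 < r -> r < size T ->
  size (nth [::] T r) <= size (nth [::] T r.-1).
Proof.
move=> /andP[_ sorted_sizes] r0 rT.
have := (sortedP 0 sorted_sizes) r.-1; rewrite prednK // size_map => /(_ rT).
by rewrite !(nth_map [::]) // (leq_ltn_trans (leq_pred r) rT).
Qed.

Section SwapPrefixes.
Variables (T : tableau) (r c : nat).
Hypotheses (uT : uniq (flatten T)) (r0 : 0 < r) (rT : r < size T)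
  (cRi : c < size (nth [::] T r))
  (RiRj : size (nth [::] T r) <= size (nth [::] T r.-1)).
Local Notation Ri := (nth [::] T r).
Local Notation Rj := (nth [::] T r.-1).
Local Notation T' := (swap_prefixes T r c).
Local Notation i := (entry T r c).
Local Notation j := (entry T r.-1 c).

Lemma pred_r_neq : r.-1 != r.
Proof. by rewrite neq_ltn ltn_predL r0. Qed.

Lemma pred_r_lt : r.-1 < size T.
Proof. exact: leq_ltn_trans (leq_pred r) rT. Qed.

Lemma cRj : c < size Rj.
Proof. exact: leq_trans cRi RiRj. Qed.

Lemma nth_T' m : nth [::] T' m =
  if m == r.-1 then take c.+1 Ri ++ drop c.+1 Rj
  else if m == r then take c.+1 Rj ++ drop c.+1 Ri else nth [::] T m.
Proof. by rewrite !nth_set_nth /= nth_set_nth. Qed.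

Lemma size_row_T' m : size (nth [::] T' m) = size (nth [::] T m).
Proof.
rewrite nth_T'; case: (m =P r.-1) => [->|_]; first by rewrite size_splice ?cRj.
by case: (m =P r) => [->|_]; rewrite ?size_splice ?cRj.
Qed.

Lemma size_T' : size T' = size T.
Proof.
by rewrite !size_set_nth prednK // (maxn_idPr rT) (maxn_idPr (ltnW rT)).
Qed.

(* The row, in T, of the box (s, y) of T': rows r-1 and r are exchanged in
   the columns y <= c, and nothing moves elsewhere. *)
Definition row_move (s y : nat) : nat := if y <= c then swap r r.-1 s else s.

Lemma row_moveK s y : row_move (row_move s y) y = s.
Proof. by rewrite /row_move; case: leqP => // _; rewrite swapK. Qed.

Lemma entry_T' s y : entry T' s y = entry T (row_move s y) y.
Proof.
rewrite /entry nth_T' /row_move.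
case: (s =P r.-1) => [->|ns1]; last case: (s =P r) => [->|ns].
- by rewrite nth_splice // /swap (negbTE pred_r_neq) eqxx; case: leqP.
- by rewrite nth_splice ?cRj // /swap eqxx; case: leqP.
- by case: leqP => // _; rewrite swap_id //; apply/eqP.
Qed.

Lemma swap_rows_size s y : y <= c ->
  (y < size (nth [::] T (swap r r.-1 s))) = (y < size (nth [::] T s)).
Proof.
move=> yc; have yRi := leq_ltn_trans yc cRi; have yRj := leq_ltn_trans yc cRj.
rewrite /swap; case: (s =P r) => [->|_]; first by rewrite yRi yRj.
by case: (s =P r.-1) => [->|_]; rewrite ?yRi ?yRj.
Qed.

Lemma swap_rows_valid (b : bool) s y : (b -> y <= c) ->
  s < size T -> y < size (nth [::] T s) ->
  let s' := if b then swap r r.-1 s else s in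
  s' < size T /\ y < size (nth [::] T s').
Proof.
case: b => //= /(_ isT) yc sT ys; rewrite swap_rows_size //; split => //.
by rewrite /swap; case: eqP => _; [exact: pred_r_lt | case: eqP].
Qed.

Lemma perm_T' : perm_eq (flatten T') (flatten T).
Proof.
set A := take c.+1 Ri ++ drop c.+1 Rj; set B := take c.+1 Rj ++ drop c.+1 Ri.
have sz : size (take r T) = r by rewrite size_takel // ltnW.
have T'E : T' = take r.-1 T ++ A :: B :: drop r.+1 T.
  rewrite /swap_prefixes (set_nthE T) rT set_nthE size_cat sz /= ltn_addr ?ltn_predL //.
  rewrite take_cat sz ltn_predL r0 take_takel ?leq_pred //.
  by rewrite prednK // drop_cat sz ltnn subnn drop0.
have TE : T = take r.-1 T ++ Rj :: Ri :: drop r.+1 T.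
  by rewrite -{1}(cat_take_drop r.-1 T) (drop_nth [::] pred_r_lt) prednK // (drop_nth [::] rT).
rewrite [in X in perm_eq _ X]TE T'E !flatten_cat /= perm_cat2l !catA perm_cat2r.
apply/permP => p; rewrite !count_cat.
rewrite -{3}(cat_take_drop c.+1 Ri) -{3}(cat_take_drop c.+1 Rj) !count_cat; lia.
Qed.

Lemma uT' : uniq (flatten T').
Proof. by rewrite (perm_uniq perm_T'). Qed.

Lemma i_neq_j : i != j.
Proof.
apply/eqP => /(entry_inj uT rT cRi pred_r_lt cRj) [/eqP rr1 _].
by move: pred_r_neq; rewrite eq_sym rr1.
Qed.

(* The row, in T, of the image under the transposition (i j) of the entry in
   box (s, y) of T. *)
Definition col_move (s y : nat) : nat := if y == c then swap r r.-1 s else s.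

Lemma swap_entry s y : s < size T -> y < size (nth [::] T s) ->
  swap i j (entry T s y) = entry T (col_move s y) y.
Proof.
move=> sT ys; rewrite /col_move.
have other t : t < size T -> c < size (nth [::] T t) -> (s, y) != (t, c) ->
    entry T s y != entry T t c.
  by move=> tT ct; apply: contra_neq => /(entry_inj uT sT ys tT ct) [-> ->].
case: (y =P c) => [yc|/eqP nyc].
  subst y; case: (s =P r) => [->|/eqP nsr]; first by rewrite !swapL.
  case: (s =P r.-1) => [->|/eqP nsr1]; first by rewrite !swapR.
  by rewrite !swap_id // other // ?cRj ?pred_r_lt // xpair_eqE eqxx andbT.
by rewrite swap_id // other // ?cRj ?pred_r_lt // xpair_eqE negb_and nyc orbT.
Qed.

Lemma pos_swap s y : s < size T -> y < size (nth [::] T s) ->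
  let x := swap i j (entry T s y) in
  [/\ row_of T x = col_move s y, col_of T x = y,
      has_right T x = (y.+1 < size (nth [::] T (col_move s y))) &
      right_of T x = entry T (col_move s y) y.+1].
Proof.
move=> sT ys /=; rewrite swap_entry //.
have [cT yc] := swap_rows_valid (fun h : y == c => eq_leq (eqP h)) sT ys.
by rewrite -/(col_move s y) in cT yc; apply: pos_entry.
Qed.

Lemma data_T' s y : s < size T -> y < size (nth [::] T s) ->
  let x := entry T s y in
  [/\ row_of T' x = row_move s y, col_of T' x = y,
      has_right T' x = has_right T (swap i j x) &
      right_of T' x = right_of T (swap i j x)].
Proof.
move=> sT ys /=.
have [mT ym] := swap_rows_valid (fun h : y <= c => h) sT ys.
rewrite -/(row_move s y) in mT ym.
have eT' : entry T s y = entry T' (row_move s y) y by rewrite entry_T' row_moveK.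
have [||rx cx hx ox] := pos_entry uT' (s := row_move s y) (y := y);
  rewrite ?size_T' ?size_row_T' //.
rewrite -eT' in rx cx hx ox; rewrite rx cx hx ox size_row_T'.
have [_ _ -> ->] := pos_swap sT ys.
rewrite entry_T' /row_move /col_move; split => //; case: (ltngtP y c) => yc //.
- by rewrite swap_rows_size.
- by rewrite swapK.
Qed.

Lemma short_row s y : y < c -> ~~ (y.+1 < size (nth [::] T s)) -> s != r /\ s != r.-1.
Proof.
move=> yc short; split; apply: contraNneq short => ->.
- exact: leq_ltn_trans yc cRi.
- exact: leq_ltn_trans yc cRj.
Qed.

Lemma inv_shape_T' sa ya sb yb :
  sa < size T -> ya < size (nth [::] T sa) ->
  sb < size T -> yb < size (nth [::] T sb) ->
  inv_shape T' (entry T sa ya) (entry T sb yb)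
  = inv_shape T (swap i j (entry T sa ya)) (swap i j (entry T sb yb)).
Proof.
move=> saT yas sbT ybs.
have [ra ca ha oa] := data_T' saT yas; have [rb cb hb ob] := data_T' sbT ybs.
have [rsa csa hsa osa] := pos_swap saT yas; have [rsb csb hsb osb] := pos_swap sbT ybs.
rewrite /inv_shape ra ca ha oa rb cb hb ob rsa csa hsa osa rsb csb hsb osb.
case: (ya =P yb) => //= yab; subst yb.
case: (ltnP ya c) => yc; last by rewrite /row_move /col_move eqn_leq yc andbT.
rewrite /row_move /col_move (ltnW yc) (ltn_eqF yc); congr (_ || _).
case: (boolP (ya.+1 < size (nth [::] T sa))) => long_a /=.
  case: (boolP (ya.+1 < size (nth [::] T sb))) => long_b //=.
  by have [nb nb1] := short_row yc long_b; have [-> _] := swap_pred_ltn sa r0 nb nb1.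
by have [na na1] := short_row yc long_a; have [_ ->] := swap_pred_ltn sb r0 na na1.
Qed.

Lemma i_mem : i \in flatten T. Proof. exact: entry_mem rT cRi. Qed.
Lemma j_mem : j \in flatten T. Proof. exact: entry_mem pred_r_lt cRj. Qed.

Lemma n_inv_T' : n_inv T' =
  \sum_(a <- flatten T) \sum_(b <- flatten T) ((swap i j a < swap i j b) && inv_shape T a b).
Proof.
rewrite n_invE (sum2_perm _ perm_T').
rewrite -(sum2_perm_map (fun a b => (swap i j a < swap i j b) && inv_shape T a b)
                        (perm_map_swap uT i_mem j_mem)).
apply: eq_big_seq => a aT; apply: eq_big_seq => b bT; rewrite /= !swapK.
have [saT yas <-] := mem_pos aT; have [sbT ybs <-] := mem_pos bT.
by rewrite inv_shape_T'.
Qed.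

Lemma minmax_ij :
  [/\ minn i j \in flatten T, maxn i j \in flatten T,
      col_of T (minn i j) = c, col_of T (maxn i j) = c & minn i j < maxn i j].
Proof.
have [_ ci _ _] := pos_entry uT rT cRi; have [_ cj _ _] := pos_entry uT pred_r_lt cRj.
have ij := i_neq_j.
case: (leqP i j) => [le_ij|lt_ji]; first by rewrite ci cj i_mem j_mem ltn_neqAle ij le_ij.
by rewrite ci cj i_mem j_mem.
Qed.

Hypothesis between : all (fun k =>
  ((col_of T k == c) && (minn i j < k < maxn i j)) ==>
  (is_inv T (minn i j) k (+) is_inv T k (maxn i j))) (flatten T).

Lemma between_balanced k : k \in flatten T -> minn i j < k < maxn i j ->
  inv_shape T (minn i j) k + inv_shape T k (maxn i j)
  = inv_shape T k (minn i j) + inv_shape T (maxn i j) k.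
Proof.
move=> kT /andP[lo_k k_hi]; have [loT hiT clo chi _] := minmax_ij.
have := implyP (allP between k kT); rewrite lo_k k_hi andbT.
case: (col_of T k =P c) => [ck|/eqP ck] /=; last first.
  by rewrite /inv_shape clo chi !(eq_sym c) (negbTE ck).
rewrite !is_invE lo_k k_hi loT hiT kT /= => /(_ isT) xor_inv.
rewrite (inv_shape_antisym uT loT kT) ?(ltn_eqF lo_k) ?clo ?ck //.
rewrite (inv_shape_antisym uT kT hiT) ?(ltn_eqF k_hi) ?chi ?ck //.
by move: xor_inv; case: (inv_shape T _ k); case: (inv_shape T k _).
Qed.

Lemma n_inv_swap_prefixes :
  if is_inv T (minn i j) (maxn i j) then n_inv T' + 1 = n_inv T
  else n_inv T' = n_inv T + 1.
Proof.
have [loT hiT clo chi lohi] := minmax_ij.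
have := inversions_transpose uT loT hiT lohi between_balanced.
under eq_bigr do under eq_bigr do rewrite !swap_minmax.
rewrite -n_invE -n_inv_T' is_invE lohi loT hiT /=.
rewrite (inv_shape_antisym uT loT hiT) ?(ltn_eqF lohi) ?clo ?chi //.
by case: (inv_shape T _ _) => /=; rewrite ?addn0 ?addn1.
Qed.

End SwapPrefixes.

Theorem lemma2p1 (T : tableau) (i : nat) :
  row_standard T -> in_D T i ->
  let j := above T i in
  if is_inv T (minn i j) (maxn i j)
  then n_inv (delta T i) + 1 = n_inv T
  else n_inv (delta T i) = n_inv T + 1.
Proof.
move=> /and3P[shape perm_iota _] /and5P[iT r0 _ _ between] /=.
have uT : uniq (flatten T) by rewrite (perm_uniq perm_iota) iota_uniq.
have [rT cRi ei] := mem_pos iT.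
rewrite deltaE; move: between r0 rT cRi ei; rewrite /above.
set r := row_of T i; set c := col_of T i => between r0 rT cRi ei.
rewrite -ei in between *.
exact: n_inv_swap_prefixes uT r0 rT cRi (size_row_pred shape r0 rT) between.
Qed.
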